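(* Let $G$ be a graph and $\mathscr{C}$ a group-theoretical graph category. Then for all $k,l\in\mathbb{N}_0$, $$\mathrm{span}\{\hat T^G_{\mathbf{K}}\mid\mathbf{K}\in\mathscr{C}(k,l)\}=\mathrm{span}\{T^G_{\mathbf{K}}\mid\mathbf{K}\in\mathscr{C}(k,l)\}.$$
   Context: Graphs are finite, undirected, without multiple edges, loops allowed, up to isomorphism; $N_k$ is the edgeless graph on $k$ vertices; graph homomorphisms map edges (including loops) to edges. Bilabelled graph: $(K,\mathbf{a},\mathbf{b})$ with $\mathbf{a}\in V(K)^k$, $\mathbf{b}\in V(K)^l$, up to isomorphism; $\mathscr{C}(k,l)$ denotes those in $\mathscr{C}$ with $k$ inputs and $l$ outputs. Operations: tensor product $(K,\mathbf{a},\mathbf{b})\otimes(H,\mathbf{c},\mathbf{d})=(K\sqcup H,\mathbf{a}\mathbf{c},\mathbf{b}\mathbf{d})$; composition (for $|\mathbf{b}|=|\mathbf{c}|$) $(H,\mathbf{c},\mathbf{d})\cdot(K,\mathbf{a},\mathbf{b})=(H\cdot K,\mathbf{a},\mathbf{d})$ with $H\cdot K$ the quotient of $K\sqcup H$ identifying $b_i$ with $c_i$; involution swaps $\mathbf{a},\mathbf{b}$. For a partition $\pi$ of $V(K)$, $K/\pi$ has the blocks as vertices, with an edge between two (possibly equal) blocks iff there is one in $K$ between some of their elements, and $(K,\mathbf{a},\mathbf{b})/\pi=(K/\pi,q_\pi(\mathbf{a}),q_\pi(\mathbf{b}))$. A graph category is a set of bilabelled graphs containing $(N_0,\emptyset,\emptyset)$,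 $(M,(v),(v))$ and $(M,\emptyset,(v,v))$ ($M$ the one-vertex loopless graph with vertex $v$) and closed under tensor products, compositions and involution; it is group-theoretical if it is closed under all quotients $\mathbf{K}\mapsto\mathbf{K}/\pi$. With the vertices of $G$ labelled $1,\dots,n$, $[T^G_{\mathbf{K}}]_{\mathbf{j}\mathbf{i}}=\#\{\phi\colon K\to G\text{ homomorphism}\mid\phi(\mathbf{a})=\mathbf{i},\phi(\mathbf{b})=\mathbf{j}\}$, and $\hat T^G_{\mathbf{K}}$ is defined the same way counting only injective homomorphisms; both are linear maps $(\mathbb{C}^n)^{\otimes k}\to(\mathbb{C}^n)^{\otimes l}$. *)

From HB Require Import structures.
From mathcomp Require Import all_boot all_order all_algebra.
From mathcomp Require Import complex reals.
Unset Printing Implicit Defensive.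
Import Order.TTheory GRing.Theory Num.Theory.
Local Open Scope ring_scope.

(* The relation gadj need not be
   symmetric: the (undirected) edge set is its symmetrization [gedge];
   gedge u u is a loop. *)
Record graph := Graph { gsize : nat; gadj : rel 'I_gsize }.

Definition gedge (G : graph) (u v : 'I_(gsize G)) : bool :=
  gadj G u v || gadj G v u.

Record bgraph := BGraph {
  bg : graph;
  bin : seq 'I_(gsize bg);
  bout : seq 'I_(gsize bg) }.

Definition biso (K H : bgraph) : Prop :=
  exists f : 'I_(gsize (bg K)) -> 'I_(gsize (bg H)),
    bijective f /\
    (forall u v, gedge (bg H) (f u) (f v) = gedge (bg K) u v) /\
    map f (bin K) = bin H /\ map f (bout K) = bout H.

Definition Mgraph : graph := @Graph 1 (fun _ _ : 'I_1 => false).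
Definition N0b : bgraph := @BGraph (@Graph 0 (fun _ _ : 'I_0 => false)) [::] [::].
Definition M11 : bgraph := @BGraph Mgraph [:: ord0] [:: ord0].
Definition M02 : bgraph := @BGraph Mgraph [::] [:: ord0; ord0].

Definition dunion_adj (K H : graph) (x y : 'I_(gsize K + gsize H)) : bool :=
  match split x, split y with
  | inl x', inl y' => gadj K x' y'
  | inr x', inr y' => gadj H x' y'
  | _, _ => false
  end.
Definition dunion (K H : graph) : graph := @Graph (gsize K + gsize H) (dunion_adj K H).

Definition btensor (K H : bgraph) : bgraph :=
  @BGraph (dunion (bg K) (bg H))
    (map (@lshift _ _) (bin K) ++ map (@rshift _ _) (bin H))
    (map (@lshift _ _) (bout K) ++ map (@rshift _ _) (bout H)).

Definition binvol (K : bgraph) : bgraph := @BGraph (bg K) (bout K) (bin K).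

(* Quotient of a graph along a map q (a partition pi of V(K) is given by a
   surjection q onto 'I_p whose fibres are the blocks): two (possibly equal)
   blocks are adjacent iff some of their elements are adjacent in K. *)
Definition gquot (K : graph) (p : nat) (q : 'I_(gsize K) -> 'I_p) : graph :=
  @Graph p (fun x y => [exists u, exists v, (q u == x) && (q v == y) && gadj K u v]).

Definition bquot (K : bgraph) (p : nat) (q : 'I_(gsize (bg K)) -> 'I_p) : bgraph :=
  @BGraph (gquot (bg K) p q) (map q (bin K)) (map q (bout K)).

Definition surj {A B : Type} (f : A -> B) : Prop := forall y, exists x, f x = y.

(* The identifications b_i ~ c_i on K ⊔ H, used for the composition H . K *)
Definition comp_rel (K H : bgraph) : rel 'I_(gsize (bg K) + gsize (bg H)) :=
  fun u v =>
    let z := zip (map (@lshift _ _) (bout K)) (map (@rshift _ _) (bin H)) in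
    ((u, v) \in z) || ((v, u) \in z).

Definition comp_quotient (K H : bgraph) (p : nat)
    (q : 'I_(gsize (bg K) + gsize (bg H)) -> 'I_p) : Prop :=
  surj q /\ forall u v, (q u == q v) = connect (comp_rel K H) u v.

(* The composition (H, c, d) . (K, a, b) = (H . K, a, d), computed via q *)
Definition bcomp (K H : bgraph) (p : nat)
    (q : 'I_(gsize (bg K) + gsize (bg H)) -> 'I_p) : bgraph :=
  @BGraph (gquot (dunion (bg K) (bg H)) p q)
    (map (fun x => q (@lshift _ _ x)) (bin K))
    (map (fun x => q (@rshift _ _ x)) (bout H)).

(* A set of bilabelled graphs (up to isomorphism, i.e. an isomorphism-closed
   predicate on concrete representatives). *)
Definition graph_category (C : bgraph -> Prop) : Prop :=
  [/\ (forall K H, biso K H -> C K -> C H),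
      C N0b /\ C M11 /\ C M02,
      (forall K H, C K -> C H -> C (btensor K H)),
      (forall K H p (q : 'I_(gsize (bg K) + gsize (bg H)) -> 'I_p),
          size (bout K) = size (bin H) -> comp_quotient K H p q ->
          C K -> C H -> C (bcomp K H p q))
    & (forall K, C K -> C (binvol K))].

Definition group_theoretical (C : bgraph -> Prop) : Prop :=
  graph_category C /\
  (forall K p (q : 'I_(gsize (bg K)) -> 'I_p), surj q -> C K -> C (bquot K p q)).

Definition is_hom (K G : graph) (f : 'I_(gsize K) -> 'I_(gsize G)) : bool :=
  [forall u, forall v, gedge K u v ==> gedge G (f u) (f v)].

Definition hom_count (G : graph) (K : bgraph) (i j : seq 'I_(gsize G)) : nat :=
  #|[pred f : {ffun 'I_(gsize (bg K)) -> 'I_(gsize G)} |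
      is_hom (bg K) G f && (map f (bin K) == i) && (map f (bout K) == j)]|.
Definition inj_hom_count (G : graph) (K : bgraph) (i j : seq 'I_(gsize G)) : nat :=
  #|[pred f : {ffun 'I_(gsize (bg K)) -> 'I_(gsize G)} |
      injectiveb f && is_hom (bg K) G f && (map f (bin K) == i) && (map f (bout K) == j)]|.

(* T^G_K and \hat T^G_K as (C^n)^{⊗k} -> (C^n)^{⊗l}, given by their entries
   [T]_{j i} with j an l-tuple and i a k-tuple of vertices of G. *)
Definition homT {F : fieldType} (G : graph) (k l : nat) (K : bgraph)
    (j : l.-tuple 'I_(gsize G)) (i : k.-tuple 'I_(gsize G)) : F :=
  (hom_count G K i j)%:R.
Definition injhomT {F : fieldType} (G : graph) (k l : nat) (K : bgraph)
    (j : l.-tuple 'I_(gsize G)) (i : k.-tuple 'I_(gsize G)) : F :=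
  (inj_hom_count G K i j)%:R.

Definition in_span {F : fieldType} {X A B : Type} (P : X -> Prop)
    (T : X -> A -> B -> F) (v : A -> B -> F) : Prop :=
  exists (N : nat) (Ks : 'I_N -> X) (c : 'I_N -> F),
    (forall t, P (Ks t)) /\ forall j i, v j i = \sum_(t < N) c t * T (Ks t) j i.

Definition Ckl (C : bgraph -> Prop) (k l : nat) (K : bgraph) : Prop :=
  C K /\ size (bin K) = k /\ size (bout K) = l.

(* Write N_S(K) for the number of label-preserving homomorphisms K -> G that
   are injective on the vertex set S, so that N_0(K) and N_V(K) are the entries
   of T^G_K and of \hat T^G_K.  For t outside S, a homomorphism injective on S
   is either injective on S + t, or it identifies t with exactly one w in S, and
   then it factors uniquely through the quotient K/{t = w}, injectively on the
   image of S.  Hence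
     N_S(K) = N_{S+t}(K) + sum_{w in S} N_{S/(t = w)}(K/{t = w}),
   and the quotients stay in C because C is group-theoretical.  Induction on the
   number of vertices outside S puts N_S(K) in the span of the injective counts,
   and induction on |S| (reading the identity backwards) puts it in the span of
   the plain counts; both spans therefore contain each other's generators. *)

From HB Require Import structures.
From mathcomp Require Import all_boot all_order all_algebra.
From mathcomp Require Import complex reals.
From mathcomp Require Import zify.
Import GRing.Theory.

Section Span.
Local Open Scope ring_scope.
Context {F : fieldType} {X A B : Type} {P : X -> Prop}.

Lemma in_span_ext {T : X -> A -> B -> F} {v w} :
  in_span P T v -> (forall j i, v j i = w j i) -> in_span P T w.
Proof.
move=> [N [Ks [c [PKs Ev]]]] evw; exists N, Ks, c; split=> // j i.
by rewrite -evw Ev.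
Qed.

Lemma in_span0 {T : X -> A -> B -> F} : in_span P T (fun _ _ => 0).
Proof.
exists 0%N, (fun t : 'I_0 => False_rect X (notF (ltn_ord t))), (fun _ => 0).
by split=> [[]|j i]; rewrite ?big_ord0.
Qed.

Lemma in_span_gen {T : X -> A -> B -> F} K : P K -> in_span P T (T K).
Proof.
move=> PK; exists 1%N, (fun _ => K), (fun _ => 1); split=> // j i.
by rewrite big_ord1 mul1r.
Qed.

Lemma in_span_add {T : X -> A -> B -> F} {v w} :
  in_span P T v -> in_span P T w -> in_span P T (fun j i => v j i + w j i).
Proof.
move=> [N1 [K1 [c1 [PK1 Ev]]]] [N2 [K2 [c2 [PK2 Ew]]]].
exists (N1 + N2)%N, (fun t => match split t with inl x => K1 x | inr y => K2 y end),
  (fun t => match split t with inl x => c1 x | inr y => c2 y end).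
split=> [t|j i]; first by case: (split t).
by rewrite big_split_ord Ev Ew; congr (_ + _); apply: eq_bigr => x _;
  [rewrite (unsplitK (inl x)) | rewrite (unsplitK (inr x))].
Qed.

Lemma in_span_scale {T : X -> A -> B -> F} a {v} :
  in_span P T v -> in_span P T (fun j i => a * v j i).
Proof.
move=> [N [Ks [c [PKs Ev]]]]; exists N, Ks, (fun t => a * c t); split=> // j i.
by rewrite Ev mulr_sumr; apply: eq_bigr => t _; rewrite mulrA.
Qed.

Lemma in_span_sum {T : X -> A -> B -> F} {I : Type} (r : seq I) (Q : pred I)
    (u : I -> A -> B -> F) :
  (forall x, Q x -> in_span P T (u x)) ->
  in_span P T (fun j i => \sum_(x <- r | Q x) u x j i).
Proof.
move=> span_u; elim: r => [|x r IHr].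
  by apply: (in_span_ext in_span0) => j i; rewrite big_nil.
case Qx: (Q x).
  by apply: (in_span_ext (in_span_add (span_u x Qx) IHr)) => j i; rewrite big_cons Qx.
by apply: (in_span_ext IHr) => j i; rewrite big_cons Qx.
Qed.

Lemma in_span_trans {T1 T2 : X -> A -> B -> F} v :
  (forall K, P K -> in_span P T2 (T1 K)) -> in_span P T1 v -> in_span P T2 v.
Proof.
move=> span_T1 [N [Ks [c [PKs Ev]]]].
have span_terms t : in_span P T2 (fun j i => c t * T1 (Ks t) j i).
  exact/in_span_scale/span_T1.
apply: (in_span_ext (in_span_sum (index_enum 'I_N) xpredT
  (fun t j i => c t * T1 (Ks t) j i) (fun t _ => span_terms t))).
by move=> j i; rewrite Ev.
Qed.

End Span.

Lemma card_predE (T : finType) (Q : pred T) : #|[pred x | Q x]| = \sum_x Q x.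
Proof.
by rewrite -sum1_card big_mkcond; apply: eq_bigr => x _; rewrite inE; case: (Q x).
Qed.

Section Merge.
Context {n : nat} (t : 'I_n).

(* The quotient map identifying [t] with [lift t w]; see [merge_factor]. *)
Definition merge (w : 'I_n.-1) (u : 'I_n) : 'I_n.-1 := odflt w (unlift t u).

Lemma merge_lift w : cancel (lift t) (merge w).
Proof. by move=> x; rewrite /merge liftK. Qed.

Lemma lift_merge w u : u != t -> lift t (merge w u) = u.
Proof. by rewrite /merge; case: unliftP => [x ->|->] //; rewrite eqxx. Qed.

Lemma surj_merge w : surj (merge w).
Proof. by move=> x; exists (lift t x); rewrite merge_lift. Qed.

Lemma merge_inj (S : {set 'I_n}) w : t \notin S -> {in S &, injective (merge w)}.
Proof.
move=> tS u v uS vS /(congr1 (lift t)).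
by rewrite !lift_merge //; apply: contraNneq tS => <-.
Qed.

Lemma merge_pivot w : merge w t = w.
Proof. by rewrite /merge unlift_none. Qed.

Lemma merge_factor (Y : Type) (f : 'I_n -> Y) w :
  f t = f (lift t w) -> f \o lift t \o merge w =1 f.
Proof.
move=> ftw u /=; have [->|ut] := eqVneq u t; last by rewrite lift_merge.
by rewrite merge_pivot.
Qed.

Lemma dinjectiveU1_collisions (Y : eqType) (f : 'I_n -> Y) (S : {set 'I_n}) :
  t \notin S -> {in S &, injective f} ->
  (dinjectiveb f (t |: S) + \sum_(w | lift t w \in S) (f t == f (lift t w)))%N = 1%N.
Proof.
move=> tS injf.
case: (pickP [pred w | (lift t w \in S) && (f t == f (lift t w))]) => [w | nocoll].
  case/andP=> wS /eqP ftw.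
  have -> : dinjectiveb f (t |: S) = false.
    apply/negbTE/dinjectivePn; exists t; first by rewrite setU11.
    by exists (lift t w) => //; rewrite !inE eq_sym neq_lift wS orbT.
  rewrite (bigD1 w) //= ftw eqxx big1 // => w' /andP[w'S w'w].
  case: eqP => // /injf-/(_ wS w'S)/lift_inj eqw.
  by rewrite eqw eqxx in w'w.
rewrite big1 => [|w wS]; last by move: (nocoll w); rewrite /= wS => /= ->.
have noclash v : v \in S -> f t <> f v.
  case: (unliftP t v) => [x -> xS ftx|->]; last by rewrite (negbTE tS).
  by move: (nocoll x); rewrite /= xS ftx eqxx.
rewrite addn0; apply/eqP; rewrite eqb1; apply/dinjectiveP => u v.
rewrite !inE => /predU1P[->|uS] /predU1P[->|vS] //; last exact: injf.
  by move/noclash.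
by move/esym/noclash.
Qed.

Lemma card_dinjectiveU1 {Y : finType} {P : pred {ffun 'I_n -> Y}} (S : {set 'I_n}) :
  t \notin S ->
  #|[pred f | P f && dinjectiveb f S]| =
  (#|[pred f | P f && dinjectiveb f (t |: S)]|
   + \sum_(w | lift t w \in S)
       #|[pred f | P f && dinjectiveb f S && (f t == f (lift t w))]|)%N.
Proof.
move=> tS; rewrite !card_predE.
under [X in (_ + X)%N]eq_bigr do rewrite card_predE.
rewrite exchange_big -big_split /=; apply: eq_bigr => f _.
case: (P f); last by rewrite big1.
have [/dinjectiveP injf|noinjf] /= := boolP (dinjectiveb f S).
  by rewrite dinjectiveU1_collisions.
rewrite big1 // addn0; apply/esym/eqP; rewrite eqb0; apply: contra noinjf.
move=> /dinjectiveP injf; apply/dinjectiveP.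
by apply: sub_in2 injf => u; rewrite !inE orbC => ->.
Qed.

End Merge.

Lemma dinjectiveb_imset (aT rT : finType) (Y : eqType) (q : aT -> rT) (g : rT -> Y)
    (S : {set aT}) :
  {in S &, injective q} -> dinjectiveb g (q @: S) = dinjectiveb (g \o q) S.
Proof.
move=> injq; apply/dinjectiveP/dinjectiveP => injg.
  move=> u v uS vS /injg eq_q; apply: injq => //; apply: eq_q; exact: imset_f.
by move=> _ _ /imsetP[u uS ->] /imsetP[v vS ->] /injg-/(_ uS vS) ->.
Qed.

Lemma gedge_quot (K : graph) p (q : 'I_(gsize K) -> 'I_p) u v :
  gedge K u v -> gedge (gquot K p q) (q u) (q v).
Proof.
by case/orP=> [Kuv|Kvu]; apply/orP; [left|right]; apply/existsP;
  [exists u|exists v]; apply/existsP; [exists v|exists u]; rewrite !eqxx.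
Qed.

Lemma gedge_quotP (K : graph) p (q : 'I_(gsize K) -> 'I_p) x y :
  gedge (gquot K p q) x y -> exists u v, [/\ q u = x, q v = y & gedge K u v].
Proof.
case/orP=> /existsP[u] /existsP[v] /andP[/andP[/eqP qu /eqP qv] Kuv].
  by exists u, v; rewrite /gedge Kuv.
by exists v, u; rewrite /gedge Kuv orbT.
Qed.

Lemma is_hom_quot (K G : graph) p (q : 'I_(gsize K) -> 'I_p) (g : 'I_p -> 'I_(gsize G)) :
  is_hom (gquot K p q) G g = is_hom K G (g \o q).
Proof.
apply/forallP/forallP => homg u; apply/forallP => v; apply/implyP.
  by move/(@gedge_quot _ _ q)/(implyP (forallP (homg (q u)) (q v))).
by case/gedge_quotP=> [x [y [<- <- Kxy]]]; apply: (implyP (forallP (homg x) y)).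
Qed.

Definition is_lhom (G : graph) (K : bgraph) (i j : seq 'I_(gsize G))
    (f : 'I_(gsize (bg K)) -> 'I_(gsize G)) : bool :=
  [&& is_hom (bg K) G f, map f (bin K) == i & map f (bout K) == j].

Definition hom_count_on (G : graph) (K : bgraph) (S : {set 'I_(gsize (bg K))})
    (i j : seq 'I_(gsize G)) : nat :=
  #|[pred f : {ffun 'I_(gsize (bg K)) -> 'I_(gsize G)} |
      is_lhom G K i j f && dinjectiveb f S]|.

Definition bmerge (K : bgraph) (t : 'I_(gsize (bg K))) (w : 'I_(gsize (bg K)).-1) :
    bgraph :=
  bquot K (gsize (bg K)).-1 (merge t w).

Section HomCounts.
Context {G : graph} {i j : seq 'I_(gsize G)}.

Lemma eq_is_lhom K f g : f =1 g -> is_lhom G K i j f = is_lhom G K i j g.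
Proof.
move=> efg; rewrite /is_lhom !(eq_map efg); congr andb.
by apply: eq_forallb => u; apply: eq_forallb => v; rewrite !efg.
Qed.

Lemma is_lhom_quot K p (q : 'I_(gsize (bg K)) -> 'I_p) (g : 'I_p -> 'I_(gsize G)) :
  is_lhom G (bquot K p q) i j g = is_lhom G K i j (g \o q).
Proof. by rewrite /is_lhom is_hom_quot /= -!map_comp. Qed.

Lemma hom_count_on_set0 K : hom_count_on G K set0 i j = hom_count G K i j.
Proof.
apply: eq_card => f; rewrite !inE.
have inj0 : {in set0 &, injective f} by move=> u; rewrite inE.
by rewrite [dinjectiveb _ _](introT (dinjectiveP _ _) inj0) andbT -andbA.
Qed.

Lemma hom_count_on_setT K : hom_count_on G K setT i j = inj_hom_count G K i j.
Proof.
apply: eq_card => f; rewrite !inE.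
have -> : dinjectiveb f setT = injectiveb f by apply: eq_dinjectiveb => // u; rewrite inE.
by rewrite andbC -!andbA.
Qed.

Lemma card_collisions_bmerge K (S : {set 'I_(gsize (bg K))}) t w : t \notin S ->
  #|[pred f : {ffun 'I_(gsize (bg K)) -> 'I_(gsize G)} |
      is_lhom G K i j f && dinjectiveb f S && (f t == f (lift t w))]|
  = hom_count_on G (bmerge K t w) (merge t w @: S) i j.
Proof.
move=> tS.
pose lift_fun (g : {ffun 'I_(gsize (bg K)).-1 -> 'I_(gsize G)}) :
  {ffun 'I_(gsize (bg K)) -> 'I_(gsize G)} := [ffun u => g (merge t w u)].
have lift_fun_inj : injective lift_fun.
  move=> g1 g2 /ffunP eq_g; apply/ffunP => x.
  by have := eq_g (lift t x); rewrite !ffunE merge_lift.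
have lift_funE (g : {ffun 'I_(gsize (bg K)).-1 -> 'I_(gsize G)}) :
    is_lhom G (bmerge K t w) i j g && dinjectiveb g (merge t w @: S)
    = is_lhom G K i j (lift_fun g) && dinjectiveb (lift_fun g) S.
  rewrite is_lhom_quot dinjectiveb_imset; last exact: merge_inj.
  by congr andb; [apply: eq_is_lhom | apply: eq_dinjectiveb] => // u; rewrite ffunE.
rewrite /hom_count_on -(card_imset _ lift_fun_inj).
apply: eq_card => f; rewrite !inE.
apply/idP/imsetP => [/andP[fS /eqP ftw]|[g]].
  have f_factor : lift_fun [ffun x => f (lift t x)] = f.
    by apply/ffunP => u; rewrite !ffunE; apply: merge_factor.
  by exists [ffun x => f (lift t x)]; rewrite // inE lift_funE f_factor.
rewrite inE lift_funE => gS ->; apply/andP; split=> //.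
by rewrite !ffunE merge_pivot merge_lift.
Qed.

Lemma hom_count_onU1 K (S : {set 'I_(gsize (bg K))}) t : t \notin S ->
  hom_count_on G K S i j = hom_count_on G K (t |: S) i j
    + \sum_(w | lift t w \in S) hom_count_on G (bmerge K t w) (merge t w @: S) i j.
Proof.
move=> tS; rewrite /hom_count_on (card_dinjectiveU1 t S tS); congr addn.
by apply: eq_bigr => w _; apply: card_collisions_bmerge.
Qed.

End HomCounts.

Definition homT_on {F : fieldType} (G : graph) (k l : nat) (K : bgraph)
    (S : {set 'I_(gsize (bg K))})
    (j : l.-tuple 'I_(gsize G)) (i : k.-tuple 'I_(gsize G)) : F :=
  (hom_count_on G K S i j)%:R.

Section HomSpans.
Local Open Scope ring_scope.
Context {F : fieldType} {G : graph} {C : bgraph -> Prop} {k l : nat}.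
Hypothesis C_group_theoretical : group_theoretical C.

Lemma Ckl_bmerge K t w : Ckl C k l K -> Ckl C k l (bmerge K t w).
Proof.
case: C_group_theoretical => _ C_quot [CK [size_in size_out]].
by split; [apply: C_quot (surj_merge t w) CK | rewrite /= !size_map].
Qed.

Lemma homT_onU1 K (S : {set 'I_(gsize (bg K))}) t : t \notin S -> forall j i,
  homT_on G k l K S j i = homT_on G k l K (t |: S) j i
    + \sum_(w | lift t w \in S) homT_on G k l (bmerge K t w) (merge t w @: S) j i :> F.
Proof. by move=> tS j i; rewrite /homT_on (hom_count_onU1 K S t tS) natrD natr_sum. Qed.

Lemma homT_on_in_injhom_span K (S : {set 'I_(gsize (bg K))}) :
  Ckl C k l K -> in_span (Ckl C k l) (@injhomT F G k l) (homT_on G k l K S).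
Proof.
move Ed: #|~: S| => d; elim: d K S Ed => [|d IHd] K S Ed CK.
  have -> : S = setT by rewrite -[S]setCK (cards0_eq Ed) setC0.
  by apply: (in_span_ext (in_span_gen _ CK)) => j i; rewrite /homT_on hom_count_on_setT.
have [t] : exists t, t \in ~: S by apply/set0Pn; rewrite -card_gt0 Ed.
rewrite inE => tS.
have card_tS : #|~: (t |: S)| = d.
  by have := cardsC (t |: S); have := cardsC S; rewrite cardsU1 tS Ed; lia.
have card_mS w : #|~: (merge t w @: S)| = d.
  have := cardsC (merge t w @: S); rewrite card_in_imset; last exact: merge_inj.
  have := cardsC S; rewrite !card_ord Ed => /(congr1 predn); rewrite addnS /= => eS eM.
  by apply/eqP; rewrite -(eqn_add2l #|S|) eM -eS.
have span_merged w : lift t w \in S ->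
    in_span (Ckl C k l) (@injhomT F G k l) (homT_on G k l (bmerge K t w) (merge t w @: S)).
  by move=> _; exact: IHd (bmerge K t w) _ (card_mS w) (Ckl_bmerge K t w CK).
apply: (in_span_ext (in_span_add (IHd K (t |: S) card_tS CK)
  (in_span_sum (index_enum _) _ _ span_merged))) => j i.
by rewrite (homT_onU1 K S t tS).
Qed.

Lemma homT_on_in_hom_span K (S : {set 'I_(gsize (bg K))}) :
  Ckl C k l K -> in_span (Ckl C k l) (@homT F G k l) (homT_on G k l K S).
Proof.
move Ed: #|S| => d; elim: d K S Ed => [|d IHd] K S Ed CK.
  rewrite (cards0_eq Ed).
  by apply: (in_span_ext (in_span_gen _ CK)) => j i; rewrite /homT_on hom_count_on_set0.
have [t tS] : exists t, t \in S by apply/set0Pn; rewrite -card_gt0 Ed.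
have tS' : t \notin S :\ t by rewrite setD11.
have card_S' : #|S :\ t| = d by move: Ed; rewrite (cardsD1 t) tS; case.
have card_mS w : #|merge t w @: (S :\ t)| = d.
  by rewrite card_in_imset //; apply: merge_inj.
have span_merged w : lift t w \in S :\ t ->
    in_span (Ckl C k l) (@homT F G k l) (homT_on G k l (bmerge K t w) (merge t w @: (S :\ t))).
  by move=> _; exact: IHd (bmerge K t w) _ (card_mS w) (Ckl_bmerge K t w CK).
apply: (in_span_ext (in_span_add (IHd K _ card_S' CK)
  (in_span_scale (-1) (in_span_sum (index_enum _) _ _ span_merged)))) => j i.
by rewrite (homT_onU1 K _ t tS') setD1K // mulN1r addrK.
Qed.

End HomSpans.

Theorem proposition4p9 (R : realType) (G : graph) (C : bgraph -> Prop) :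
  group_theoretical C ->
  forall (k l : nat) (v : l.-tuple 'I_(gsize G) -> k.-tuple 'I_(gsize G) -> R[i]),
    in_span (Ckl C k l) (@injhomT R[i] G k l) v <->
    in_span (Ckl C k l) (@homT R[i] G k l) v.
Proof.
move=> C_gt k l v; split; apply: in_span_trans => K CK.
  apply: (in_span_ext (homT_on_in_hom_span C_gt K setT CK)) => j i.
  by rewrite /homT_on hom_count_on_setT.
apply: (in_span_ext (homT_on_in_injhom_span C_gt K set0 CK)) => j i.
by rewrite /homT_on hom_count_on_set0.
Qed.
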